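(* $\mathcal{L}_{\mathsf{SAFA_{init}}}$ and $\mathcal{L}_{\mathsf{KRFA}}$ are incomparable: there is a data language accepted by some SAFA with initialization but by no $k$-register automaton (for any $k$), and there is a data language accepted by some $k$-register automaton but by no SAFA with initialization.
   Context: $D$ is a fixed countably infinite set of data values; for a finite alphabet $\Sigma$, data languages are subsets of $(\Sigma\times D)^*$. A set augmented finite automaton (SAFA) is a tuple $M=(Q,\Sigma\times D,q_0,F,H,\delta)$: $Q$ finite set of states, $q_0\in Q$ initial, $F\subseteq Q$ final, $H=\{h_1,\dots,h_m\}$ a finite collection of (names of) sets of data values, $\delta\subseteq Q\times\Sigma\times C\times OP\times Q$ with $C=\{p(h_i),\,!p(h_i)\}$, $OP=\{-\}\cup\{\mathsf{ins}(h_i)\}$. Configurations are $(q,\langle S_1,\dots,S_m\rangle)$, $S_i\subseteq D$ finite. On reading $(a,d)$, a transition $(q,a,\alpha,op,q')$ from the current state may be taken if $\alpha=p(h_i)$ and $d\in S_i$, or $\alpha=\,!p(h_i)$ and $d\notin S_i$; then the state becomes $q'$ and if $op=\mathsf{ins}(h_j)$, $d$ is added to $S_j$. A word is accepted if some run reads it entirely and ends in $F$. In an ordinary SAFA all sets start empty; a SAFA with initialization additionally specifies initial contents (finite subsets of $D$) of the sets in $H$ before the computation starts. $\mathcal{L}_{\mathsf{SAFA_{init}}}$ is the class of data languages accepted by nondeterministic SAFA with initialization. A $k$-register automaton is a tuple $(Q,\Sigma,\delta,\tau_0,U,q_0,F)$ with finite state set $Q$, initial state $q_0$, final states $F$, initial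 register assignment $\tau_0:\{1,\dots,k\}\to D\cup\{\bot\}$ (non-$\bot$ values pairwise distinct), partial update function $U:Q\times\Sigma\to\{1,\dots,k\}$, and $\delta\subseteq Q\times\Sigma\times\{1,\dots,k\}\times Q$. Reading $(a,d)$ in state $q$: if $d$ equals the content of register $i$, a transition $(q,a,i,q')\in\delta$ is taken (halt if none); otherwise, if $U(q,a)$ is defined, $d$ is written into register $U(q,a)$ and a transition $(q,a,U(q,a),q')\in\delta$ is taken (halt if none or if $U(q,a)$ undefined). A word is accepted if entirely consumed ending in $F$. $\mathcal{L}_{\mathsf{KRFA}}$ is the class of languages accepted by $k$-register automata for some $k\ge 1$. *)

From mathcomp Require Import all_boot.
Set Implicit Arguments. Unset Strict Implicit. Unset Printing Implicit Defensive.

Definition data_word (Sigma D : Type) := seq (Sigma * D).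
Definition data_language (Sigma D : Type) := data_word Sigma D -> Prop.

Definition infinite_type (D : eqType) := forall s : seq D, exists d : D, d \notin s.

(* Sets are indexed by 'I_m (H = {h_0,...,h_(m-1)}).
   A condition is (true, i) for p(h_i) and (false, i) for !p(h_i).
   An operation is None for "-" and Some j for ins(h_j).  Set contents are finite, represented by
   sequences (only membership matters). *)
Record SAFA_init (Sigma : finType) (D : eqType) := {
  safa_Q : finType;
  safa_m : nat;
  safa_q0 : safa_Q;
  safa_F : pred safa_Q;
  safa_delta : safa_Q -> Sigma -> bool * 'I_safa_m -> option 'I_safa_m -> safa_Q -> bool;
  safa_init : 'I_safa_m -> seq D }.

Definition safa_cond_holds (D : eqType) m (S : 'I_m -> seq D)
    (c : bool * 'I_m) (d : D) : bool :=
  if c.1 then d \in S c.2 else d \notin S c.2.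

Definition safa_update (D : eqType) m (S : 'I_m -> seq D)
    (o : option 'I_m) (d : D) : 'I_m -> seq D :=
  match o with
  | None => S
  | Some j => fun i => if i == j then d :: S i else S i
  end.

Fixpoint safa_accepts_from (Sigma : finType) (D : eqType) (M : SAFA_init Sigma D)
    (q : safa_Q M) (S : 'I_(safa_m M) -> seq D) (w : data_word Sigma D) : Prop :=
  match w with
  | [::] => safa_F q
  | (a, d) :: w' =>
      exists (c : bool * 'I_(safa_m M)) (o : option 'I_(safa_m M)) (q' : safa_Q M),
        [/\ safa_delta q a c o q', safa_cond_holds S c d &
            @safa_accepts_from Sigma D M q' (safa_update S o d) w']
  end.

Definition safa_accepts (Sigma : finType) (D : eqType) (M : SAFA_init Sigma D)
    (w : data_word Sigma D) : Prop :=
  @safa_accepts_from Sigma D M (safa_q0 M) (@safa_init _ _ M) w.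

Definition in_L_SAFA_init (Sigma : finType) (D : eqType) (L : data_language Sigma D) : Prop :=
  exists M : SAFA_init Sigma D, forall w, L w <-> safa_accepts M w.

(* Registers are 'I_k; None plays the role of bot. *)
Record KRA (Sigma : finType) (D : eqType) (k : nat) := {
  kra_Q : finType;
  kra_delta : kra_Q -> Sigma -> 'I_k -> kra_Q -> bool;
  kra_tau0 : 'I_k -> option D;
  kra_U : kra_Q -> Sigma -> option 'I_k;
  kra_q0 : kra_Q;
  kra_F : pred kra_Q }.

Definition kra_wf (Sigma : finType) (D : eqType) k (A : KRA Sigma D k) : Prop :=
  forall i j : 'I_k, forall d : D,
    @kra_tau0 _ _ _ A i = Some d -> @kra_tau0 _ _ _ A j = Some d -> i = j.

Definition reg_update (D : eqType) k (tau : 'I_k -> option D) (j : 'I_k) (d : D) :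
    'I_k -> option D :=
  fun i => if i == j then Some d else tau i.

Fixpoint kra_accepts_from (Sigma : finType) (D : eqType) k (A : KRA Sigma D k)
    (q : kra_Q A) (tau : 'I_k -> option D) (w : data_word Sigma D) : Prop :=
  match w with
  | [::] => @kra_F _ _ _ A q
  | (a, d) :: w' =>
      (exists i : 'I_k, tau i = Some d /\
         exists q', @kra_delta _ _ _ A q a i q' /\ @kra_accepts_from Sigma D k A q' tau w')
      \/
      ((forall i : 'I_k, tau i <> Some d) /\
       match @kra_U _ _ _ A q a with
       | Some j => exists q', @kra_delta _ _ _ A q a j q' /\
                     @kra_accepts_from Sigma D k A q' (reg_update tau j d) w'
       | None => False
       end)
  end.

Definition kra_accepts (Sigma : finType) (D : eqType) k (A : KRA Sigma D k)
    (w : data_word Sigma D) : Prop :=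
  @kra_accepts_from Sigma D k A (kra_q0 A) (@kra_tau0 _ _ _ A) w.

Definition in_L_KRFA (Sigma : finType) (D : eqType) (L : data_language Sigma D) : Prop :=
  exists k : nat, 1 <= k /\
    exists A : KRA Sigma D k, kra_wf A /\ forall w, L w <-> kra_accepts A w.

From mathcomp Require Import all_boot.
From Stdlib Require Import FunctionalExtensionality.

Set Implicit Arguments.
Unset Strict Implicit.
Unset Printing Implicit Defensive.

(** A SAFA with one set accepts the words whose data are pairwise distinct:
    each datum is tested absent from the set and then inserted. A k-register
    automaton cannot: after k+1 distinct data some datum y among them is in no
    register, and a fresh datum, also in no register, can only be read by an
    update transition, which then reads the repeated y just as well.

    Conversely one register accepts the words whose data come in equal
    consecutive pairs. A SAFA cannot: reading a pair (y, y) of a fresh datum,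
    the first letter can only pass a negative test, and the second must pass a
    positive test on a set that was empty before the pair, since a negative
    test would equally accept (z, y) for a fresh z and a positive test on a set
    containing x would equally accept (y, x). Thus each such pair makes one
    more set nonempty, which can happen at most m times. *)

Lemma infinite_fresh_seq (D : eqType) : infinite_type D ->
  forall n (s : seq D), exists ys : seq D,
    [/\ size ys = n, uniq ys & {in ys, forall y, y \notin s}].
Proof.
move=> Dinf; elim=> [|n IH] s; first by exists [::].
have [ys [size_ys uniq_ys ys_s]] := IH s.
have [d] := Dinf (ys ++ s); rewrite mem_cat negb_or => /andP[d_ys d_s].
exists (d :: ys); split=> /=; [by rewrite size_ys | by rewrite d_ys |].
by move=> y; rewrite in_cons => /predU1P[-> // | /ys_s].
Qed.

Section RegisterAutomata.
Variables (Sigma : finType) (D : eqType) (k : nat).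

Lemma reg_update_id (tau : 'I_k -> option D) j d :
  tau j = Some d -> reg_update tau j d = tau.
Proof.
move=> tau_j; apply: functional_extensionality => i.
by rewrite /reg_update; case: eqP => [-> |].
Qed.

Lemma registers_miss (tau : 'I_k -> option D) (ys : seq D) :
  uniq ys -> k < size ys -> exists2 y, y \in ys & forall i, tau i <> Some y.
Proof.
move=> uniq_ys size_ys.
have [/hasP[y y_ys /forallP y_free] | /hasPn all_stored] :=
  boolP (has (fun y => [forall i, tau i != Some y]) ys).
  by exists y => // i; apply/eqP.
suff: size (map Some ys) <= size (codom tau).
  by rewrite size_map size_codom card_ord leqNgt size_ys.
rewrite uniq_leq_size // ?map_inj_uniq // => [x1 x2 [] // | _ /mapP[y y_ys ->]].
have /forallPn[i /negPn/eqP <-] := all_stored y y_ys.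
exact: codom_f.
Qed.

Variable A : KRA Sigma D k.
Local Notation accepts_from := (@kra_accepts_from Sigma D k A).

Lemma kra_accepts_from_cat u q tau w :
  accepts_from q tau (u ++ w) ->
  exists q' tau', [/\ accepts_from q' tau' w,
    forall w', accepts_from q' tau' w' -> accepts_from q tau (u ++ w') &
    forall i x, tau' i = Some x -> tau i = Some x \/ x \in map snd u].
Proof.
elim: u q tau => [|[a d] u IH] q tau /=.
  by move=> acc; exists q, tau; split=> // i x ->; left.
case=> [[i [tau_i [q1 [step acc]]]] | [d_free]].
  have [q' [tau' [acc' back stored]]] := IH _ _ acc.
  exists q', tau'; split=> // [w' /back acc_w' | j x tau'_j].
    by left; exists i; split=> //; exists q1.
  have [|x_u] := stored j x tau'_j; [by left | by right; rewrite in_cons x_u orbT].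
case U: (@kra_U _ _ _ A q a) => [j|] // [q1 [step acc]].
have [q' [tau' [acc' back stored]]] := IH _ _ acc.
exists q', tau'; split=> // [w' /back acc_w' | i x /stored[| x_u]].
- by right; split=> //; exists q1.
- rewrite /reg_update; case: eqP => [_ [<-] | _]; [right; exact: mem_head | by left].
- by right; rewrite in_cons x_u orbT.
Qed.

Lemma kra_accepts_last_fresh q tau a d y :
  (forall i, tau i <> Some d) -> (forall i, tau i <> Some y) ->
  accepts_from q tau [:: (a, d)] -> accepts_from q tau [:: (a, y)].
Proof. by move=> d_free y_free /= [[i [/d_free] //] | [_ U]]; right. Qed.

End RegisterAutomata.

Section SetContents.
Variables (D : eqType) (m : nat).
Implicit Type S : 'I_m -> seq D.

Definition used S : seq D := flatten (codom S).

Lemma mem_used S i x : x \in S i -> x \in used S.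
Proof. by move=> x_S; apply/flattenP; exists (S i); rewrite ?codom_f. Qed.

Lemma unused_notin S i x : x \notin used S -> x \notin S i.
Proof. exact/contra/mem_used. Qed.

Lemma usedP S x : reflect (exists i, x \in S i) (x \in used S).
Proof.
apply: (iffP flattenP) => [[_ /codomP[i ->]] | [i]]; first by exists i.
by exists (S i); rewrite ?codom_f.
Qed.

Lemma safa_cond_unused S c x : x \notin used S -> safa_cond_holds S c x = ~~ c.1.
Proof.
move=> x_unused; rewrite /safa_cond_holds.
by case: c.1; rewrite ?negbK; apply/negP => /mem_used; apply/negP.
Qed.

Lemma mem_safa_update S o d i x :
  (x \in safa_update S o d i) = (x \in S i) || (o == Some i) && (x == d).
Proof.
case: o => [j|] /=; last by rewrite orbF.
case: (eqVneq i j) => [-> | ne]; first by rewrite in_cons eqxx orbC.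
by rewrite (inj_eq Some_inj) eq_sym (negbTE ne) orbF.
Qed.

Lemma mem_safa_update_neq S o d i x :
  x != d -> (x \in safa_update S o d i) = (x \in S i).
Proof. by move=> /negbTE xd; rewrite mem_safa_update xd andbF orbF. Qed.

Definition nonempty_sets S := #|[set i | S i != [::]]|.

End SetContents.

Lemma safa_accepts_from_agree (Sigma : finType) (D : eqType) (M : SAFA_init Sigma D)
    w q S S' :
  safa_accepts_from q S w ->
  {in map snd w, forall x i, (x \in S i) = (x \in S' i)} ->
  @safa_accepts_from Sigma D M q S' w.
Proof.
elim: w q S S' => [|[a d] w IH] q S S' //= [c [o [q' [step cond acc]]]] agree.
exists c, o, q'; split=> //.
  by move: cond; rewrite /safa_cond_holds agree ?mem_head.
apply: IH acc _ => x x_w i; rewrite !mem_safa_update agree //.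
by rewrite in_cons x_w orbT.
Qed.

Section Languages.
Variables (Sigma : finType) (D : eqType) (a0 : Sigma).
Implicit Types (w : data_word Sigma D) (ys : seq D).

Definition distinct_data : data_language Sigma D := fun w => uniq (map snd w).

Fixpoint paired w : bool :=
  if w is (_, d) :: (_, e) :: w' then (d == e) && paired w' else w == [::].

Lemma map_snd_pair ys : map snd (map (pair a0) ys) = ys.
Proof. by elim: ys => //= y ys ->. Qed.

Fixpoint doubled ys : data_word Sigma D :=
  if ys is y :: ys' then (a0, y) :: (a0, y) :: doubled ys' else [::].

Lemma paired_doubled ys : paired (doubled ys).
Proof. by elim: ys => //= y ys ->; rewrite eqxx. Qed.

Lemma mem_doubled ys x : (x \in map snd (doubled ys)) = (x \in ys).
Proof. by elim: ys => //= y ys IH; rewrite !in_cons IH orbA orbb. Qed.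

Definition safa_distinct : SAFA_init Sigma D :=
  {| safa_Q := unit; safa_m := 1; safa_q0 := tt; safa_F := predT;
     safa_delta := fun _ _ c o _ => (c == (false, ord0)) && (o == Some ord0);
     safa_init := fun _ => [::] |}.

Lemma safa_distinct_accepts_from w (S : 'I_1 -> seq D) :
  safa_accepts_from (M := safa_distinct) tt S w <->
  uniq (map snd w) /\ {in map snd w, forall x, x \notin S ord0}.
Proof.
elim: w S => [|[a d] w IH] S /=; first by [].
split=> [[c [o [[] [/andP[/eqP-> /eqP->] d_S acc]]]] | [/andP[d_w uniq_w] w_S]].
  have [uniq_w w_S] := (IH _).1 acc.
  split=> [|x].
    by rewrite uniq_w andbT; apply: contraNN d_S => /w_S; rewrite mem_head.
  by rewrite in_cons => /predU1P[-> // | /w_S]; rewrite in_cons negb_or => /andP[].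
exists (false, ord0), (Some ord0), tt; split=> //; first exact: w_S (mem_head _ _).
apply/IH; split=> // x x_w /=; rewrite in_cons negb_or w_S ?in_cons ?x_w ?orbT //.
by rewrite andbT; apply: contraNneq d_w => <-.
Qed.

Lemma distinct_data_SAFA_init : in_L_SAFA_init distinct_data.
Proof.
exists safa_distinct => w; split=> [uniq_w | /safa_distinct_accepts_from[] //].
by apply/safa_distinct_accepts_from.
Qed.

Definition kra_paired : KRA Sigma D 1 :=
  {| kra_Q := bool; kra_delta := fun q _ _ q' => q' == ~~ q;
     kra_tau0 := fun _ => None;
     kra_U := fun q _ => if q then Some ord0 else None;
     kra_q0 := true; kra_F := id |}.

Local Notation kra_paired_accepts_from := (@kra_accepts_from Sigma D 1 kra_paired).

Lemma kra_paired_first tau a d w :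
  kra_paired_accepts_from true tau ((a, d) :: w) <->
  kra_paired_accepts_from false (reg_update tau ord0 d) w.
Proof.
split=> /= [[[i [tau_i [_ [/eqP-> acc]]]] | [_ [_ [/eqP-> acc]]]] // | acc].
  by rewrite (ord1 i) in tau_i; rewrite reg_update_id.
have [tau_d | tau_nd] := eqVneq (tau ord0) (Some d).
  by left; exists ord0; split=> //; exists false; rewrite -(reg_update_id tau_d).
by right; split=> [i | ]; [rewrite (ord1 i); exact/eqP | exists false].
Qed.

Lemma kra_paired_second tau b e w :
  kra_paired_accepts_from false tau ((b, e) :: w) <->
  tau ord0 = Some e /\ kra_paired_accepts_from true tau w.
Proof.
split=> /= [[[i [tau_i [_ [/eqP-> acc]]]] | [_ []]] | [tau_e acc]].
  by rewrite (ord1 i) in tau_i.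
by left; exists ord0; split=> //; exists true.
Qed.

Lemma kra_paired_accepts_from_true tau w :
  kra_paired_accepts_from true tau w <-> paired w.
Proof.
have [n] := ubnP (size w); elim: n w tau => // n IH [|[a d] [|[b e] w]] tau size_w.
- by split.
- by apply: iff_trans (kra_paired_first _ _ _ _) _.
apply: iff_trans (kra_paired_first _ _ _ _) _.
apply: iff_trans (kra_paired_second _ _ _ _) _.
have {}IH := IH w (reg_update tau ord0 d) (ltnW size_w).
have -> : reg_update tau ord0 d ord0 = Some d by rewrite /reg_update eqxx.
by split=> [[[<-] /IH] | /andP[/eqP<- /IH]] /=; rewrite ?eqxx.
Qed.

Lemma paired_KRFA : in_L_KRFA paired.
Proof.
exists 1; split=> //; exists kra_paired; split=> // w.
exact: iff_sym (kra_paired_accepts_from_true _ _).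
Qed.

Hypothesis Dinf : infinite_type D.

Lemma distinct_data_not_KRFA : ~ in_L_KRFA distinct_data.
Proof.
case=> k [_ [A [_ LA]]].
have [ys [size_ys uniq_ys _]] := infinite_fresh_seq Dinf k.+1 [::].
have [d] := Dinf (pmap (@kra_tau0 _ _ _ A) (enum 'I_k) ++ ys).
rewrite mem_cat negb_or => /andP[d_init d_ys].
have : distinct_data (map (pair a0) ys ++ [:: (a0, d)]).
  by rewrite /distinct_data map_cat map_snd_pair cat_uniq uniq_ys /= orbF andbT.
case/LA/kra_accepts_from_cat => q [tau [acc_d acc_ys stored]].
have d_free i : tau i <> Some d.
  case/stored => [init_d | ]; last by rewrite map_snd_pair (negbTE d_ys).
  by move: d_init; rewrite mem_pmap -init_d map_f ?mem_enum.
have [y y_ys y_free] := registers_miss tau uniq_ys (eq_leq (esym size_ys)).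
have /LA := acc_ys _ (kra_accepts_last_fresh d_free y_free acc_d).
by rewrite /distinct_data map_cat map_snd_pair cat_uniq /= y_ys andbF.
Qed.

Section PairedRuns.
Variable M : SAFA_init Sigma D.
Local Notation m := (safa_m M).
Local Notation accepts_from := (@safa_accepts_from Sigma D M).

Definition accepts_only_paired q (S : 'I_m -> seq D) :=
  forall v, accepts_from q S v -> paired v.

Lemma paired_second_test q S a b y ws c1 o1 q1 c2 o2 q2 :
  accepts_only_paired q S -> y \notin used S -> y \notin map snd ws ->
  {in map snd ws, forall x, x \notin used S} ->
  safa_delta q a c1 o1 q1 -> safa_cond_holds S c1 y ->
  safa_delta q1 b c2 o2 q2 -> safa_cond_holds (safa_update S o1 y) c2 y ->
  accepts_from q2 (safa_update (safa_update S o1 y) o2 y) ws ->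
  c2.1 /\ S c2.2 = [::].
Proof.
move=> only y_unused y_ws ws_unused step1 cond1 step2 cond2 acc.
have reject z x : z != x -> ~ accepts_from q S ((a, z) :: (b, x) :: ws).
  by move=> zx /only /=; rewrite (negbTE zx).
have relabel z x : safa_cond_holds S c1 z ->
    safa_cond_holds (safa_update S o1 z) c2 x ->
    {in map snd ws, forall v, (v != z) && (v != x)} ->
    accepts_from q S ((a, z) :: (b, x) :: ws).
  move=> cond1z cond2x ws_zx; exists c1, o1, q1; split=> //; exists c2, o2, q2.
  split=> //; apply: safa_accepts_from_agree acc _ => v v_ws i.
  have /andP[vz vx] := ws_zx v v_ws; have vy := memPn y_ws v v_ws.
  by rewrite !mem_safa_update_neq.
move: cond1; rewrite safa_cond_unused // => c1_neg.
case: c2 => [[] h] in step2 cond2 relabel *; last first.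
  have [z] := Dinf (y :: map snd ws ++ used S).
  rewrite in_cons mem_cat !negb_or => /and3P[zy z_ws z_unused].
  exfalso; apply: (reject z y zy); apply: relabel.
  - by rewrite safa_cond_unused.
  - by rewrite /safa_cond_holds /= mem_safa_update_neq 1?eq_sym // unused_notin.
  - by move=> v v_ws; rewrite (memPn z_ws) ?(memPn y_ws).
split=> //=; case Sh: (S h) => [|x s] //; exfalso.
have x_used : x \in used S by apply/usedP; exists h; rewrite Sh mem_head.
have yx : y != x by apply: contraNneq y_unused => ->.
apply: (reject y x yx); apply: relabel.
- by rewrite safa_cond_unused.
- by rewrite /safa_cond_holds /= mem_safa_update Sh mem_head.
- move=> v v_ws; rewrite (memPn y_ws) //=.
  by apply: contraNneq (ws_unused v v_ws) => ->.
Qed.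

Lemma paired_step q S a b y ws :
  accepts_only_paired q S -> y \notin used S -> y \notin map snd ws ->
  {in map snd ws, forall x, x \notin used S} ->
  accepts_from q S ((a, y) :: (b, y) :: ws) ->
  exists q' S', [/\ accepts_from q' S' ws, accepts_only_paired q' S',
    forall x, x != y -> x \notin used S -> x \notin used S' &
    nonempty_sets S < nonempty_sets S'].
Proof.
move=> only y_unused y_ws ws_unused.
case=> c1 [o1 [q1 [step1 cond1 [c2 [o2 [q2 [step2 cond2 acc]]]]]]].
have := paired_second_test only y_unused y_ws ws_unused step1 cond1 step2 cond2 acc.
case: c2 => [[] h] in step2 cond2 * => -[] //= _ Sh_nil.
pose S2 := safa_update (safa_update S o1 y) o2 y.
have S_sub_S2 i x : x \in S i -> x \in S2 i by rewrite !mem_safa_update => ->.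
have nonnil (s : seq D) x : x \in s -> s != [::] by case: s.
exists q2, S2; split=> //.
- move=> v acc_v; have := only ((a, y) :: (b, y) :: v); rewrite /= eqxx; apply.
  by exists c1, o1, q1; split=> //; exists (true, h), o2, q2.
- move=> x xy x_unused; apply/negP => /usedP[i].
  by rewrite !mem_safa_update_neq // => /mem_used; apply/negP.
apply/proper_card/properP; split.
  apply/subsetP => i; rewrite !inE; case Si: (S i) => [|x s] // _.
  by apply: (nonnil _ x); apply: S_sub_S2; rewrite Si mem_head.
exists h; rewrite !inE ?Sh_nil //.
by apply: (nonnil _ y); rewrite mem_safa_update; apply/orP; left.
Qed.

Lemma doubled_run_size q S ys :
  accepts_only_paired q S -> uniq ys -> {in ys, forall y, y \notin used S} ->
  accepts_from q S (doubled ys) -> nonempty_sets S + size ys <= m.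
Proof.
elim: ys q S => [|y ys IH] q S only /=.
  by rewrite addn0 (leq_trans (max_card _)) ?card_ord.
case/andP=> y_ys uniq_ys unused acc.
have [||| q' [S' [acc' only' unused' lt_S_S']]] := paired_step only _ _ _ acc.
- exact: unused (mem_head _ _).
- by rewrite mem_doubled.
- by move=> x; rewrite mem_doubled => x_ys; rewrite unused // in_cons x_ys orbT.
rewrite addnS -addSn (leq_trans _ (IH _ _ only' uniq_ys _ acc')) ?leq_add2r //.
move=> x x_ys; apply: unused'; first by apply: contraNneq y_ys => <-.
by rewrite unused // in_cons x_ys orbT.
Qed.

End PairedRuns.

Lemma paired_not_SAFA_init : ~ in_L_SAFA_init paired.
Proof.
case=> M LM.
have [ys [size_ys uniq_ys ys_unused]] :=
  infinite_fresh_seq Dinf (safa_m M).+1 (used (@safa_init _ _ M)).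
have := doubled_run_size (fun v => (LM v).2) uniq_ys ys_unused ((LM _).1 (paired_doubled ys)).
by rewrite size_ys addnS ltnNge leq_addl.
Qed.

End Languages.

Theorem theorem16 (Sigma : finType) (D : countType) (a0 : Sigma)
    (Dinf : infinite_type D) :
  (exists L : data_language Sigma D, in_L_SAFA_init L /\ ~ in_L_KRFA L) /\
  (exists L : data_language Sigma D, in_L_KRFA L /\ ~ in_L_SAFA_init L).
Proof.
split.
  exists (@distinct_data Sigma D); split; first exact: distinct_data_SAFA_init.
  exact: distinct_data_not_KRFA a0 Dinf.
exists (fun w => paired w); split; first exact: paired_KRFA.
exact: paired_not_SAFA_init a0 Dinf.
Qed.
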